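(* Let $n$ be a positive integer and $(\alpha,\beta)\in\{(0,0),(1,0),(1,1),(2,1),(3,1),(3,2),(4,2)\}$. Let \[ w_{n,\alpha,\beta}=b^{n+1}(ab)^n b^{2n+1+\alpha}a^{2n+1+\beta}. \] Then $S_d(w_{n,\alpha,\beta})\ge 3n+1+\left\lfloor\frac{\alpha+\beta}{3}\right\rfloor$.
   Context: A word is a finite word over the two-letter alphabet $\{a,b\}$, written multiplicatively (so $x^m$ is the concatenation of $m$ copies of $x$). A word $w=a_1\cdots a_n$ is a palindrome if $a_i=a_{n-i+1}$ for all $i\le n$, and an antipalindrome if $a_i\neq a_{n-i+1}$ for all $i\le n$. For a word $w$, $S_d(w)$ is the minimal number of letters of $w$ whose deletion from $w$ yields a palindrome or an antipalindrome. $\lfloor x\rfloor$ denotes the integer part of $x$. *)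

From HB Require Import structures.
From mathcomp Require Import all_boot.
Set Implicit Arguments. Unset Strict Implicit. Unset Printing Implicit Defensive.

Inductive letter := La | Lb.
Definition letter_eqb (x y : letter) : bool :=
  match x, y with La, La | Lb, Lb => true | _, _ => false end.
Lemma letter_eqP : Equality.axiom letter_eqb.
Proof. by case; case; constructor. Qed.
HB.instance Definition _ := hasDecEq.Build letter letter_eqP.

Definition word := seq letter.

Definition wpow (x : word) (m : nat) : word := flatten (nseq m x).

Definition is_palindrome (w : word) : bool :=
  all (fun i => nth La w i == nth La w (size w - i.+1)) (iota 0 (size w)).
Definition is_antipalindrome (w : word) : bool :=
  all (fun i => nth La w i != nth La w (size w - i.+1)) (iota 0 (size w)).

(* Words obtained from w by deleting letters = mask m w, m a bitseq of length |w|.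
   S_d(w) = minimal number of deleted letters yielding a palindrome or antipalindrome
   (the empty word is a palindrome, so the minimum exists). *)
Definition Sd (w : word) : nat :=
  \big[minn/size w]_(t : (size w).-tuple bool
        | is_palindrome (mask t w) || is_antipalindrome (mask t w))
     (size w - size (mask t w)).

Definition w_nab (n al be : nat) : word :=
  wpow [:: Lb] n.+1 ++ wpow [:: La; Lb] n ++ wpow [:: Lb] (2*n + 1 + al)
  ++ wpow [:: La] (2*n + 1 + be).

From mathcomp Require Import all_boot zify.

Set Implicit Arguments. Unset Strict Implicit. Unset Printing Implicit Defensive.

(* Every subsequence of w = b^(n+1) (ab)^n b^(2n+1+al) a^(2n+1+be) has the shape
   b^x p b^y a^d with p a subsequence of (ab)^n, x <= n+1, y <= 2n+1+al and
   d <= 2n+1+be.  In a subsequence p of (ab)^n, the leading run of b's plus the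
   number of a's is at most n, and either leading run plus |p| is at most 2n+1.
   Comparing the leading runs of P with those of its reversal (for a palindrome)
   or of its reversed complement (for an antipalindrome, which moreover has as
   many a's as b's) bounds |P| by 4n+2+max(al, 2be).  Hence
   S_d(w) >= 3n+1+al+be-max(al, 2be), and for each of the seven listed pairs
   al+be-max(al, 2be) >= floor((al+be)/3). *)

Definition flip (x : letter) : letter := if x is La then Lb else La.

Definition run (x : letter) (s : word) : nat := find (predC (pred1 x)) s.

Lemma run_cat x (s t : word) :
  run x (s ++ t) = if all (pred1 x) s then size s + run x t else run x s.
Proof. by rewrite /run find_cat has_predC; case: all. Qed.

Lemma run_nseq_cat x d (s : word) : run x (nseq d x ++ s) = d + run x s.
Proof. by rewrite run_cat all_pred1_nseq size_nseq. Qed.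

Lemma run_all x (s : word) : all (pred1 x) s -> run x s = size s.
Proof. by move=> sx; apply: hasNfind; rewrite has_predC sx. Qed.

Lemma count_flip x (s : word) : count_mem x (map flip s) = count_mem (flip x) s.
Proof. by rewrite count_map; apply: eq_count; case: x => -[]. Qed.

Lemma size_count_mem (s : word) : size s = count_mem La s + count_mem Lb s.
Proof. by rewrite -(count_predC (pred1 La)); congr (_ + _); apply: eq_count => -[]. Qed.

Lemma subseq_consE (T : eqType) (q r : seq T) (y : T) : subseq q (y :: r) ->
  [\/ q = [::], exists2 q' : seq T, q = y :: q' & subseq q' r | subseq q r].
Proof.
case: q => [|x q]; first by constructor 1.
by rewrite /=; case: eqP => [->|_] sub_q; [constructor 2; exists q | constructor 3].
Qed.

Lemma wpow_seq1 (x : letter) k : wpow [:: x] k = nseq k x.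
Proof. by elim: k => //= k; rewrite /wpow /= => ->. Qed.

Lemma size_wpow (x : word) m : size (wpow x m) = size x * m.
Proof. by rewrite /wpow size_flatten /shape map_nseq sumn_nseq. Qed.

Definition ab n : word := wpow [:: La; Lb] n.

Lemma subseq_ab_bounds n (q : word) : subseq q (ab n) ->
  [/\ run Lb q + count_mem La q <= n, size q + run La q <= (2 * n).+1
    & run Lb q + size q <= 2 * n].
Proof.
elim: n q => [|n IHn] q; first by rewrite subseq0 => /eqP ->.
have sub_bab r : subseq r (Lb :: ab n) ->
    [/\ run Lb r + count_mem La r <= n.+1, count_mem La r <= n,
        size r + run La r <= (2 * n).+1 & run Lb r + size r <= (2 * n).+2].
  case/subseq_consE => [->|[r' -> /IHn[]]|/IHn[]] //=; rewrite /run /= => *; split; lia.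
case/subseq_consE => [->|[q' -> /sub_bab[]]|/sub_bab[]] //=; rewrite /run /= => *; split; lia.
Qed.

Lemma subseq_catE (T : eqType) (p u v : seq T) : subseq p (u ++ v) ->
  exists p1 p2, [/\ p = p1 ++ p2, subseq p1 u & subseq p2 v].
Proof.
case/subseqP => m sz_m ->; rewrite -(cat_take_drop (size u) m) mask_cat; last first.
  by rewrite size_takel // sz_m size_cat leq_addr.
by exists (mask (take (size u) m) u), (mask (drop (size u) m) v); rewrite !mask_subseq.
Qed.

Lemma subseq_nseqE (T : eqType) (p : seq T) k (x : T) : subseq p (nseq k x) ->
  p = nseq (size p) x /\ size p <= k.
Proof.
move=> sub_p; split; last by rewrite -(size_nseq k x) size_subseq.
apply/all_pred1P/allP => y /(mem_subseq sub_p).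
by rewrite mem_nseq => /andP[].
Qed.

Lemma subseq_w_nab n al be (P : word) : subseq P (w_nab n al be) ->
  exists x y d (p : word),
    [/\ P = nseq x Lb ++ p ++ nseq y Lb ++ nseq d La, subseq p (ab n),
        x <= n.+1, y <= 2 * n + 1 + al & d <= 2 * n + 1 + be].
Proof.
rewrite /w_nab !wpow_seq1 => /subseq_catE[p1 [q1 [-> /subseq_nseqE[-> s1]]]].
case/subseq_catE => p [q2 [-> sub_p /subseq_catE[p3 [p4 [->]]]]].
move=> /subseq_nseqE[-> s3] /subseq_nseqE[-> s4].
by rewrite !size_nseq in s1 s3 s4; exists (size p1), (size p3), (size p4), p.
Qed.

Lemma palindrome_rev (p : word) : is_palindrome p -> rev p = p.
Proof.
move=> /allP pal_p; apply: (@eq_from_nth _ La) => [|i]; rewrite size_rev // => lt_i.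
by rewrite nth_rev //; apply/esym/eqP/pal_p; rewrite mem_iota.
Qed.

Lemma antipalindrome_flip_rev (p : word) : is_antipalindrome p -> map flip (rev p) = p.
Proof.
move=> /allP anti_p; apply: (@eq_from_nth _ La) => [|i]; rewrite size_map size_rev // => lt_i.
rewrite (nth_map La) ?size_rev // nth_rev //.
by have := anti_p i; rewrite mem_iota lt_i; case: (nth _ _ i); case: nth => // /(_ isT).
Qed.

Lemma count_mem_all (x y : letter) (s : word) :
  all (pred1 y) s -> count_mem x s = (y == x) * size s.
Proof. by move/all_pred1P => ->; rewrite count_nseq size_nseq. Qed.

Lemma antipalindrome_shape_size n x y d (p P : word) : subseq p (ab n) ->
  P = nseq x Lb ++ p ++ nseq y Lb ++ nseq d La -> map flip (rev P) = P ->
  size P <= 2 * maxn d (x + n).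
Proof.
move=> /subseq_ab_bounds[run_count _ _] eP anti_P.
have balanced : count_mem La P = count_mem Lb P.
  by rewrite -{1}anti_P count_flip count_rev.
have size_P : size P = 2 * count_mem La P by rewrite size_count_mem -balanced; lia.
have count_P : count_mem La P = count_mem La p + d.
  by rewrite eP !count_cat !count_nseq /=; lia.
have run_P : d <= run Lb P.
  by rewrite -anti_P eP !rev_cat !rev_nseq -!catA map_cat map_nseq run_nseq_cat leq_addr.
case: (boolP (all (pred1 Lb) p)) => [/(count_mem_all La) | not_b].
  by rewrite size_P count_P => -> /=; lia.
by move: run_P; rewrite {1}eP run_nseq_cat run_cat (negbTE not_b); lia.
Qed.

Lemma palindrome_shape_size n x y d (p P : word) : subseq p (ab n) -> x <= n.+1 ->
  P = nseq x Lb ++ p ++ nseq y Lb ++ nseq d La -> rev P = P ->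
  size P <= maxn (n + d) ((2 * n).+1 + maxn y (2 * n).+1).
Proof.
move=> /subseq_ab_bounds[_ size_runA run_sizeB] le_x eP pal_P.
have size_P : size P = x + size p + y + d by rewrite eP !size_cat !size_nseq; lia.
have rev_P : rev P = nseq d La ++ nseq y Lb ++ rev p ++ nseq x Lb.
  by rewrite eP !rev_cat !rev_nseq -!catA.
case: (posnP d) => [d0 | d_gt0].
  have : y <= run Lb P by rewrite -pal_P rev_P d0 run_nseq_cat leq_addr.
  by rewrite {1}eP run_nseq_cat run_cat; case: ifP => [/run_all | _]; lia.
have run_P : d <= run La P by rewrite -pal_P rev_P run_nseq_cat leq_addr.
have x0 : x = 0.
  by case: x eP {le_x size_P rev_P} => // x eP; move: run_P; rewrite eP /run /=; lia.
move: run_P; rewrite {1}eP x0 /= run_cat; case: ifP => [/run_all run_a | _]; last by lia.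
by case: y size_P {eP rev_P} => [|y] size_P; rewrite /run /=; lia.
Qed.

Lemma palindromic_subseq_w_nab n al be (P : word) : subseq P (w_nab n al be) ->
  is_palindrome P || is_antipalindrome P -> size P <= 4 * n + 2 + maxn al (2 * be).
Proof.
case/subseq_w_nab => x [y [d [p [eP sub_p le_x le_y le_d]]]].
case/orP => [/palindrome_rev | /antipalindrome_flip_rev] sym_P.
  by have := palindrome_shape_size sub_p le_x eP sym_P; lia.
by have := antipalindrome_shape_size sub_p eP sym_P; lia.
Qed.

Lemma Sd_lower_bound (w : word) B :
  (forall P, subseq P w -> is_palindrome P || is_antipalindrome P -> size P <= B) ->
  size w <= Sd w + B.
Proof.
move=> bounded; apply: (big_ind (fun v => size w <= v + B)) => [|u v|t sym_t].
- exact: leq_addr.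
- by lia.
have le_B : size (mask t w) <= B := bounded _ (mask_subseq t w) sym_t.
by rewrite -leq_subLR subKn // size_subseq ?mask_subseq.
Qed.

Lemma size_w_nab n al be : size (w_nab n al be) = 7 * n + 3 + al + be.
Proof. by rewrite /w_nab !size_cat !size_wpow /=; lia. Qed.

Theorem lemma4 (n al be : nat) :
  0 < n ->
  (al, be) \in [:: (0, 0); (1, 0); (1, 1); (2, 1); (3, 1); (3, 2); (4, 2)] ->
  3 * n + 1 + (al + be) %/ 3 <= Sd (w_nab n al be).
Proof.
(* The bound also holds for n = 0. *)
move=> _ pairs.
have small_excess : (al + be) %/ 3 + maxn al (2 * be) <= al + be.
  move: pairs; rewrite !inE.
  by repeat case/orP => [/eqP[-> ->] //|]; move/eqP => [-> ->].
have := Sd_lower_bound (@palindromic_subseq_w_nab n al be).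
rewrite size_w_nab; lia.
Qed.
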